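(* For every $n\geq1$, $$\sum_{\sigma\in\mathfrak S_{n}}u^{{\rm L}(\sigma)}(-1)^{{\rm RLmin}(\sigma)}=\begin{cases}(1-u)^{\lfloor n/2\rfloor},& n\text{ even},\\ -(1-u)^{\lfloor n/2\rfloor},& n\text{ odd}.\end{cases}$$
   Context: For $\sigma=\sigma_1\cdots\sigma_n\in\mathfrak S_n$: ${\rm L}(\sigma)$ (left peaks) is the number of $i$ with $1\le i<n$ and $\sigma_{i-1}<\sigma_i>\sigma_{i+1}$, with the convention $\sigma_0=0$; ${\rm RLmin}(\sigma)$ is the number of $i$ with $\sigma_j>\sigma_i$ for all $j>i$. *)

From mathcomp Require Import all_boot all_order all_algebra all_fingroup.
Set Implicit Arguments. Unset Strict Implicit. Unset Printing Implicit Defensive.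
Import GRing.Theory.

(* One-line notation of a permutation s of 'I_n as the word
   sigma_1 ... sigma_n with values in {1,...,n}: sigma_i = s (i-1) + 1. *)
Definition word (n : nat) (s : 'S_n) : seq nat := [seq (s i).+1 | i <- enum 'I_n].

(* sigma_i for 1 <= i <= n, with the convention sigma_0 = 0. *)
Definition letter (w : seq nat) (i : nat) : nat :=
  if i is k.+1 then nth 0 w k else 0.

Definition lpk (w : seq nat) : nat :=
  count (fun i => (letter w i.-1 < letter w i) && (letter w i.+1 < letter w i))
        (iota 1 (size w).-1).

Definition rlmin (w : seq nat) : nat :=
  count (fun i => all (fun j => letter w i < letter w j) (iota i.+1 (size w - i)))
        (iota 1 (size w)).

Definition L (n : nat) (s : 'S_n) : nat := lpk (word s).
Definition RLmin (n : nat) (s : 'S_n) : nat := rlmin (word s).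

Example ex1 : lpk [:: 2; 1; 3] = 1%N. Proof. reflexivity. Qed.
Example ex2 : lpk [:: 1; 3; 2] = 1%N. Proof. reflexivity. Qed.
Example ex3 : lpk [:: 1; 2; 3] = 0%N. Proof. reflexivity. Qed.
Example ex4 : rlmin [:: 2; 1; 3] = 2%N. Proof. reflexivity. Qed.
Example ex5 : rlmin [:: 1; 2; 3] = 3%N. Proof. reflexivity. Qed.
Example ex6 : rlmin [:: 3; 2; 1] = 1%N. Proof. reflexivity. Qed.

From mathcomp Require Import all_boot all_order all_algebra all_fingroup.
From mathcomp Require Import zify ring.
Import GRing.Theory.

(* Every permutation of [1..n+1] arises exactly once by inserting the letter
   n+1 into one of the n+1 gaps of a permutation w of [1..n].  Inserted last,
   it adds a right-to-left minimum and no peak.  Inserted into any other gap,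
   it leaves the right-to-left minima alone and creates a new peak, unless
   the gap is adjacent to one of the k peaks of w (2k gaps), in which case
   it replaces that peak.  So the polynomial F_n of the theorem satisfies
   F_(n+1) = (n u - 1) F_n + 2 u (1 - u) F_n', solved by
   F_n = (-1)^n (1 - u)^(n/2). *)

Set Implicit Arguments.
Unset Strict Implicit.
Unset Printing Implicit Defensive.

Definition is_peak (p a : nat) (t : seq nat) : bool :=
  if t is b :: _ then (p < a) && (b < a) else false.

(* [p] is the letter preceding [w]. *)
Fixpoint peaks (p : nat) (w : seq nat) : nat :=
  if w is a :: t then is_peak p a t + peaks a t else 0.

Fixpoint rlmins (w : seq nat) : nat :=
  if w is a :: t then all (fun b => a < b) t + rlmins t else 0.

Definition letter_from (p : nat) (w : seq nat) (i : nat) : nat :=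
  if i is k.+1 then nth 0 w k else p.

Lemma map_letter_from p t : map (letter_from p t) (iota 1 (size t)) = t.
Proof. by rewrite -[1]/(1 + 0) iotaDl -map_comp -[RHS](mkseq_nth 0). Qed.

Lemma count_peaks p w :
  count (fun i => (letter_from p w i.-1 < letter_from p w i) &&
                  (letter_from p w i.+1 < letter_from p w i))
        (iota 1 (size w).-1) = peaks p w.
Proof.
elim: w p => [|a t IHw] p //=.
case: t IHw => [|b t] IHw //.
rewrite -(IHw a) /= -[2]/(1 + 1) iotaDl count_map; congr (_ + _).
apply: eq_in_count => -[|i]; rewrite mem_iota // => _.
by case: i.
Qed.

Lemma lpk_peaks w : lpk w = peaks 0 w.
Proof. exact: count_peaks. Qed.

Lemma count_rlmins p w :
  count (fun i => all (fun j => letter_from p w i < letter_from p w j)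
                      (iota i.+1 (size w - i)))
        (iota 1 (size w)) = rlmins w.
Proof.
elim: w p => [|a t IHw] p //=.
rewrite -(IHw a); congr (_ + _).
  rewrite subn1 -[2]/(1 + 1) iotaDl all_map -[in RHS](map_letter_from a t) all_map.
  by congr (nat_of_bool _); apply: eq_all => -[].
rewrite -[2]/(1 + 1) iotaDl count_map; apply: eq_count => i /=.
rewrite subSS -[i.+2]/(1 + i.+1) iotaDl all_map.
by apply: eq_all => j /=; case: i; case: j.
Qed.

Lemma rlmin_rlmins w : rlmin w = rlmins w.
Proof. exact: count_rlmins. Qed.

Definition ins (i x : nat) (w : seq nat) : seq nat := take i w ++ x :: drop i w.

Lemma ins_size x w : ins (size w) x w = rcons w x.
Proof. by rewrite /ins take_size drop_size cats1. Qed.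

Lemma perm_ins i x w : perm_eq (ins i x w) (x :: w).
Proof. by rewrite /ins -cat1s perm_catCA /= perm_cons cat_take_drop. Qed.

Lemma all_ins (P : pred nat) i x w : all P (ins i x w) = P x && all P w.
Proof. by rewrite /ins all_cat /= -{3}(cat_take_drop i w) all_cat andbCA. Qed.

Lemma index_ins i x w : x \notin w -> i <= size w -> index x (ins i x w) = i.
Proof.
move=> xNw le_iw; rewrite /ins index_cat ifN ?(contra (@mem_take _ _ _ _)) //.
by rewrite /= eqxx addn0 size_takel.
Qed.

Lemma ins_inj i1 i2 x w1 w2 : x \notin w1 -> x \notin w2 ->
  i1 <= size w1 -> i2 <= size w2 -> ins i1 x w1 = ins i2 x w2 -> (w1, i1) = (w2, i2).
Proof.
move=> xNw1 xNw2 le_i1 le_i2 eq_ins.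
have ei : i1 = i2 by rewrite -(index_ins xNw1 le_i1) eq_ins index_ins.
subst i2; move/eqP: eq_ins; rewrite eqseq_cat ?size_takel //.
case/andP=> /eqP eq_take /eqP [eq_drop].
by rewrite -(cat_take_drop i1 w1) eq_take eq_drop cat_take_drop.
Qed.

Lemma permutations_cons_ins x s : x \notin s ->
  perm_eq (permutations (x :: s))
          [seq ins i x w | w <- permutations s, i <- iota 0 (size s).+1].
Proof.
move=> xNs; apply: uniq_perm; first exact: permutations_uniq.
  apply: allpairs_uniq; [exact: permutations_uniq | exact: iota_uniq |].
  move=> [w1 i1] [w2 i2] mem1 mem2.
  case/allpairsP: mem1 => [[v1 j1] [v1s j1s [-> ->]]].
  case/allpairsP: mem2 => [[v2 j2] [v2s j2s [-> ->]]] /=.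
  rewrite mem_permutations in v1s; rewrite mem_permutations in v2s.
  rewrite !mem_iota !add0n !ltnS /= in j1s j2s.
  by apply: ins_inj; rewrite ?(perm_mem v1s) ?(perm_mem v2s) ?(perm_size v1s) ?(perm_size v2s).
move=> v; rewrite mem_permutations; apply/idP/allpairsP.
  move=> pv; have xv: x \in v by rewrite (perm_mem pv) mem_head.
  case/splitPr: xv pv => v1 v2 pv.
  exists (v1 ++ v2, size v1) => /=; split.
  - by rewrite mem_permutations -(perm_cons x) -cat1s perm_catCA.
  - rewrite -[0 :: _]/(iota 0 (size s).+1) mem_iota.
    by have := perm_size pv; rewrite size_cat /=; lia.
  - by rewrite /ins take_size_cat // drop_size_cat.
case=> [[w i]] /= [ws _ ->]; rewrite mem_permutations in ws.
by rewrite (permPl (perm_ins i x w)) perm_cons.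
Qed.

(* [gap_peaks p w i] counts the peaks of [p :: w] adjacent to the gap just
   before position [i] of [w]; at most one, as peaks are never adjacent. *)
Fixpoint gap_peaks (p : nat) (w : seq nat) (i : nat) : nat :=
  if w is a :: t then
    if i is j.+1 then ((j == 0) && is_peak p a t) + gap_peaks a t j
    else is_peak p a t
  else 0.

Lemma gap_peaks_le1 p w i : gap_peaks p w i <= 1.
Proof.
elim: w p i => [|a t IHw] p [|[|j]] //=; rewrite /is_peak.
- by case: t {IHw} => [|b t] //; case: (_ && _).
- case: t {IHw} => [|b [|c t]] //=; first by case: (_ && _).
  by case: (ltnP b a) => [/ltnW/leq_gtF-> | _]; rewrite ?andbF; case: (_ && _).
- by rewrite add0n.
Qed.

Lemma sum_gap_peaks p w : \sum_(i < size w) gap_peaks p w i = 2 * peaks p w.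
Proof.
elim: w p => [|a t IHw] p; first by rewrite big_ord0.
rewrite big_ord_recl /= big_split /= IHw.
case: t {IHw} => [|b t]; first by rewrite big_ord0.
by rewrite big_ord_recl big1 /=; lia.
Qed.

Lemma peaks_ins_max p x w i : p < x -> all (fun b => b < x) w -> i < size w ->
  peaks p (ins i x w) + gap_peaks p w i = (peaks p w).+1.
Proof.
elim: w p i => [|a t IHw] p i //= lt_px /andP[lt_ax lt_tx].
case: i => [_|j] /=.
  rewrite /ins /= /is_peak lt_px lt_ax (leq_gtF (ltnW lt_ax)) /=.
  by case: t {IHw lt_tx} => [|b t] /=; rewrite ?(leq_gtF (ltnW lt_ax)) ?andbF; lia.
rewrite ltnS => lt_jt; have := IHw a j lt_ax lt_tx lt_jt.
case: j lt_jt => [|j] lt_jt.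
  by rewrite /ins take0 drop0 /= /is_peak (leq_gtF (ltnW lt_ax)) andbF; lia.
by case: t lt_tx lt_jt {IHw} => [|b t] //= _ _; lia.
Qed.

Lemma peaks_rcons_max p w x : all (fun b => b < x) w -> peaks p (rcons w x) = peaks p w.
Proof.
elim: w p => [|a t IHw] p //= /andP[lt_ax lt_tx]; rewrite IHw //; congr (_ + _).
by case: t {IHw lt_tx} => [|b t] //=; rewrite (leq_gtF (ltnW lt_ax)) andbF.
Qed.

Lemma rlmins_ins_max w i x : all (fun b => b < x) w -> i < size w ->
  rlmins (ins i x w) = rlmins w.
Proof.
elim: w i => [|a t IHw] [|j] //= /andP[lt_ax lt_tx].
  by rewrite /ins /= (leq_gtF (ltnW lt_ax)).
by rewrite ltnS => lt_jt; rewrite /ins /= -/(ins j x t) IHw // all_ins lt_ax.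
Qed.

Lemma rlmins_rcons_max w x : all (fun b => b < x) w -> rlmins (rcons w x) = (rlmins w).+1.
Proof.
by elim: w => [|a t IHw] //= /andP[lt_ax lt_tx]; rewrite IHw // all_rcons lt_ax addnS.
Qed.

Lemma word_nth n (s : 'S_n) (k : 'I_n) : nth 0 (word s) k = (s k).+1.
Proof. by rewrite /word (nth_map k) ?size_enum_ord // nth_ord_enum. Qed.

Lemma word_inj n : injective (@word n).
Proof.
move=> s t eq_st; apply/permP => k; apply: val_inj.
by have := word_nth s k; rewrite eq_st word_nth => -[].
Qed.

Lemma perm_word_iota n (s : 'S_n) : perm_eq (word s) (iota 1 n).
Proof.
have -> : word s = map (addn 1) (map val (map s (enum 'I_n))) by rewrite /word -!map_comp.
rewrite -[1]/(1 + 0) iotaDl -val_enum_ord; apply/perm_map/perm_map.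
apply: uniq_perm; rewrite ?enum_uniq ?(map_inj_uniq (@perm_inj _ s)) ?enum_uniq //.
by move=> k; rewrite mem_enum -(permKV s k) map_f ?mem_enum.
Qed.

Section BigPermutations.

Variables (R : Type) (idx : R) (op : Monoid.com_law idx).

Lemma big_Sn_word n (F : seq nat -> R) :
  \big[op/idx]_(s : 'S_n) F (word s) = \big[op/idx]_(w <- permutations (iota 1 n)) F w.
Proof.
rewrite -(big_map (@word n) xpredT); apply: perm_big.
have uniq_words : uniq (map (@word n) (index_enum {perm 'I_n})).
  by rewrite map_inj_uniq ?index_enum_uniq //; exact: word_inj.
have sub_words : {subset map (@word n) (index_enum {perm 'I_n}) <= permutations (iota 1 n)}.
  by move=> _ /mapP[s _ ->]; rewrite mem_permutations perm_word_iota.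
have size_words :
    size (permutations (iota 1 n)) <= size (map (@word n) (index_enum {perm 'I_n})).
  rewrite size_permutations ?iota_uniq // size_iota size_map -card_Sn.
  by rewrite cardT enumT /index_enum unlock.
have [_ eq_words] := uniq_min_size uniq_words sub_words size_words.
exact: uniq_perm (permutations_uniq _) eq_words.
Qed.

Lemma big_permutations_iotaS n (F : seq nat -> R) :
  \big[op/idx]_(v <- permutations (iota 1 n.+1)) F v =
  \big[op/idx]_(w <- permutations (iota 1 n)) \big[op/idx]_(i < n.+1) F (ins i n.+1 w).
Proof.
have iotaS : perm_eq (iota 1 n.+1) (n.+1 :: iota 1 n).
  by rewrite -[n.+1]addn1 iotaD perm_catC add1n addn1.
have nNiota : n.+1 \notin iota 1 n by rewrite mem_iota ltnn andbF.
rewrite (perm_big _ (perm_permutations iotaS)) (perm_big _ (permutations_cons_ins nNiota)).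
rewrite big_allpairs_dep size_iota; apply: eq_bigr => w _.
by rewrite -(big_mkord xpredT (fun i => F (ins i n.+1 w))).
Qed.

End BigPermutations.

Local Open Scope ring_scope.

Section GeneratingPolynomial.

Variable R : comNzRingType.
Implicit Types (r : nat) (w : seq nat).

Lemma sum_ins_peaks p x w : (p < x)%N -> all (fun b => b < x)%N w ->
  \sum_(i < size w) ('X^(peaks p (ins i x w)) : {poly R}) =
  (2 * peaks p w)%N%:R * 'X^(peaks p w) +
  ((size w)%:R - (2 * peaks p w)%N%:R) * 'X^((peaks p w).+1).
Proof.
move=> lt_px lt_wx.
have split_gap (i : 'I_(size w)) :
    'X^(peaks p (ins i x w)) = (gap_peaks p w i)%:R * 'X^(peaks p w) +
                               (1 - (gap_peaks p w i)%:R) * 'X^((peaks p w).+1) :> {poly R}.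
  have := peaks_ins_max lt_px lt_wx (ltn_ord i); have := gap_peaks_le1 p w i.
  case: gap_peaks => [|[|//]] _.
    by rewrite addn0 => ->; rewrite mul0r add0r subr0 mul1r.
  by rewrite addn1 => -[->]; rewrite mul1r subrr mul0r addr0.
rewrite (eq_bigr _ (fun i _ => split_gap i)).
rewrite big_split /= -!big_distrl /= sumrB -natr_sum sum_gap_peaks.
by rewrite sumr_const card_ord.
Qed.

Lemma sign_deriv r : ((-1) ^+ r : {poly R})^`() = 0.
Proof. by rewrite deriv_exp derivN derivC oppr0 mul0r mul0rn. Qed.

Definition lpk_rlmin_monomial w : {poly R} := 'X^(peaks 0 w) * (-1) ^+ rlmins w.

Lemma sum_ins_max n w : perm_eq w (iota 1 n) ->
  \sum_(i < n.+1) lpk_rlmin_monomial (ins i n.+1 w) =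
  (n%:R * 'X - 1) * lpk_rlmin_monomial w +
  2%:R * (1 - 'X) * ('X * (lpk_rlmin_monomial w)^`()).
Proof.
move=> w_perm; have size_w : size w = n by rewrite (perm_size w_perm) size_iota.
have lt_w : all (fun b => b < (size w).+1)%N w.
  by apply/allP => b; rewrite (perm_mem w_perm) mem_iota add1n size_w => /andP[].
rewrite -size_w big_ord_recr /=.
under eq_bigr => i _ do rewrite /lpk_rlmin_monomial (rlmins_ins_max lt_w (ltn_ord i)).
rewrite -big_distrl /= sum_ins_peaks // ins_size /lpk_rlmin_monomial.
rewrite peaks_rcons_max // rlmins_rcons_max //; move: (peaks 0 w) (rlmins w) => k r.
have Xderiv : 'X * ('X^k)^`() = k%:R * 'X^k :> {poly R}.
  rewrite derivXn; case: k => [|k]; first by rewrite mulr0n mulr0 mul0r.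
  by rewrite /= mulrnAr -exprS mulr_natl.
rewrite derivM sign_deriv mulr0 addr0 (mulrA 'X) Xderiv natrM !exprS; ring.
Qed.

Definition lpk_rlmin_poly n : {poly R} :=
  \sum_(w <- permutations (iota 1 n)) lpk_rlmin_monomial w.

Lemma lpk_rlmin_polyS n :
  lpk_rlmin_poly n.+1 = (n%:R * 'X - 1) * lpk_rlmin_poly n +
                        2%:R * (1 - 'X) * ('X * (lpk_rlmin_poly n)^`()).
Proof.
rewrite /lpk_rlmin_poly big_permutations_iotaS.
under eq_big_seq => w /[!mem_permutations] w_perm do rewrite sum_ins_max //.
by rewrite raddf_sum !mulr_sumr -big_split.
Qed.

Lemma lpk_rlmin_poly0 : lpk_rlmin_poly 0 = 1.
Proof. by rewrite /lpk_rlmin_poly big_seq1 /lpk_rlmin_monomial mulr1. Qed.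

Lemma one_subX_deriv m :
  (1 - 'X) * ((1 - 'X) ^+ m)^`() = - (m%:R * (1 - 'X) ^+ m) :> {poly R}.
Proof.
rewrite deriv_exp derivB derivX derivC.
case: m => [|m]; first by rewrite mulr0n mulr0 mul0r oppr0.
by rewrite -mulr_natr exprS; ring.
Qed.

Lemma lpk_rlmin_polyE n : lpk_rlmin_poly n = (-1) ^+ n * (1 - 'X) ^+ n./2.
Proof.
elim: n => [|n IHn]; first by rewrite lpk_rlmin_poly0 mulr1.
rewrite lpk_rlmin_polyS IHn derivM sign_deriv mul0r add0r.
have -> : 2%:R * (1 - 'X) * ('X * ((-1) ^+ n * ((1 - 'X) ^+ n./2)^`())) =
          2%:R * 'X * (-1) ^+ n * ((1 - 'X) * ((1 - 'X) ^+ n./2)^`()) :> {poly R} by ring.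
rewrite one_subX_deriv -uphalfE uphalf_half -[X in X%:R * _](odd_double_half n).
by case: (odd n); rewrite /= natrD -muln2 natrM ?add0n ?add1n !exprS; ring.
Qed.

End GeneratingPolynomial.

Theorem theorem1p7 (n : nat) : (1 <= n)%N ->
  \sum_(s : 'S_n) ('X ^+ L s * (-1) ^+ RLmin s : {poly int})
  = (if ~~ odd n then (1 - 'X) ^+ n./2 else - (1 - 'X) ^+ n./2).
Proof.
move=> _.
have -> : \sum_(s : 'S_n) ('X ^+ L s * (-1) ^+ RLmin s : {poly int}) = lpk_rlmin_poly int n.
  rewrite /lpk_rlmin_poly -big_Sn_word; apply: eq_bigr => s _.
  by rewrite /L /RLmin lpk_peaks rlmin_rlmins.
by rewrite lpk_rlmin_polyE -signr_odd; case: odd; rewrite ?mulN1r ?mul1r.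
Qed.
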